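(* Let $n\ge2$ and let $(x,y,z)$ be a $C^1$ solution of \[\dot x=nx^2+z^2,\quad \dot y=(n+1)z^2,\quad \dot z=\tfrac{n+1}{n}z\big((n-1)x+y\big),\qquad (x,y,z)(0)=(x_0,y_0,z_0)\in\mathbb R^3_{>0},\] on $[0,T)$, where $T$ is the maximal time of existence. Then $T\leq\big((n+1)\min\{x_0,y_0,z_0\}\big)^{-1}<\infty$, and \[x,y,z\geq\frac{1}{\min\{x_0,y_0,z_0\}^{-1}-(n+1)t}\qquad\text{for all }t\in[0,T).\] *)

From Stdlib Require Import Reals Lra.
From Coquelicot Require Import Coquelicot.
Open Scope R_scope.

Definition right_deriv (f : R -> R) (a l : R) : Prop :=
  filterlim (fun h => (f (a + h) - f a) / h) (at_right 0) (locally l).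

Definition deriv_on_0T (f f' : R -> R) (T : Rbar) : Prop :=
  right_deriv f 0 (f' 0) /\
  (forall t : R, 0 < t -> Rbar_lt t T -> is_derive f t (f' t)).

Definition is_solution (n : nat) (T : Rbar) (x y z : R -> R) (x0 y0 z0 : R) : Prop :=
  Rbar_lt 0 T /\
  x 0 = x0 /\ y 0 = y0 /\ z 0 = z0 /\
  deriv_on_0T x (fun t => INR n * (x t)^2 + (z t)^2) T /\
  deriv_on_0T y (fun t => (INR n + 1) * (z t)^2) T /\
  deriv_on_0T z (fun t => (INR n + 1) / INR n * z t * ((INR n - 1) * x t + y t)) T.

Definition maximal_solution (n : nat) (T : Rbar) (x y z : R -> R) (x0 y0 z0 : R) : Prop :=
  is_solution n T x y z x0 y0 z0 /\
  forall (T' : Rbar) (x' y' z' : R -> R),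
    Rbar_lt T T' -> ~ is_solution n T' x' y' z' x0 y0 z0.

From Stdlib Require Import Reals Lra Lia Psatz Classical.
From Coquelicot Require Import Coquelicot.
Open Scope R_scope.

(* Compare the solution with the barriers b(t) = 1 / (K - c t), which solve
   b' = c b^2.  While x, y, z >= b > 0, every component of the vector field is
   at least (n+1) b^2, so for c < n+1 and b(0) < m := min(x0, y0, z0) the
   barrier can never reach a component from below.  Letting K -> 1/m and
   c -> n+1 gives x, y, z >= 1 / (1/m - (n+1) t).  This bound has a pole at
   t = 1 / ((n+1) m), where x would have to be continuous if T were larger;
   hence T <= 1 / ((n+1) m). *)

Lemma real_induction (P : R -> Prop) (t : R) :
  (forall s, 0 <= s <= t -> (forall r, 0 <= r < s -> P r) -> P s) ->
  (forall s, 0 <= s < t -> P s -> at_right s P) ->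
  forall s, 0 <= s <= t -> P s.
Proof.
  intros Hclosed Hopen s Hs.
  set (E := fun u => 0 <= u <= t /\ forall r, 0 <= r < u -> P r).
  assert (HE0 : E 0) by (split; [lra | intros r Hr; lra]).
  destruct (completeness E) as [sup [Hub Hlub]].
  - exists t. intros u Hu. apply Hu.
  - exists 0. exact HE0.
  - assert (Hsup0 : 0 <= sup) by (apply Hub, HE0).
    assert (Hsupt : sup <= t) by (apply Hlub; intros u Hu; apply Hu).
    assert (Hbelow : forall r, 0 <= r < sup -> P r).
    { intros r Hr. destruct (classic (exists u, E u /\ r < u)) as [[u [[_ Hu] Hru]] | Hno].
      - apply Hu. lra.
      - assert (sup <= r); [|lra].
        apply Hlub. intros u Hu. apply Rnot_lt_le. intros Hru. apply Hno. eauto. }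
    assert (HPsup : P sup) by (apply Hclosed; auto).
    destruct (Req_dec sup t) as [<- | Hne].
    + destruct (Rle_lt_or_eq_dec s sup) as [Hlt | ->]; [lra | apply Hbelow; lra | exact HPsup].
    + exfalso. destruct (Hopen sup ltac:(lra) HPsup) as [eps Heps].
      pose proof (cond_pos eps) as Heps0.
      set (u := Rmin (sup + eps / 2) t).
      assert (Hu : sup < u <= sup + eps / 2).
      { unfold u. split; [apply Rmin_glb_lt; lra | apply Rmin_l]. }
      assert (HEu : E u).
      { split; [split; [lra | apply Rmin_r] |].
        intros r Hr. destruct (Rlt_le_dec r sup) as [Hrs | [Hrs | <-]].
        - apply Hbelow. lra.
        - apply Heps; [change (Rabs (r - sup) < eps); rewrite Rabs_right |]; lra.
        - exact HPsup. }
      specialize (Hub u HEu). lra.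
Qed.

Lemma at_left_of_forall_between (P : R -> Prop) (a s : R) :
  a < s -> (forall r, a < r < s -> P r) -> at_left s P.
Proof.
  intros Has HP. exists (mkposreal (s - a) ltac:(lra)). intros r Hr Hrs.
  change (Rabs (r - s) < s - a) in Hr. apply HP.
  rewrite Rabs_left in Hr; lra.
Qed.

Lemma filterlim_eventually_lt {T : Type} {F : (T -> Prop) -> Prop} {FF : Filter F}
    (f g : T -> R) (a b : R) :
  filterlim f F (locally a) -> filterlim g F (locally b) -> b < a ->
  F (fun r => g r < f r).
Proof.
  intros Hf Hg Hba. set (c := (a + b) / 2).
  assert (Hfc : F (fun r => c < f r)) by (apply Hf, open_gt; unfold c; lra).
  assert (Hgc : F (fun r => g r < c)) by (apply (Hg (fun u => u < c)), open_lt; unfold c; lra).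
  apply (filter_imp _ _ (fun r H => Rlt_trans _ c _ (proj2 H) (proj1 H))).
  exact (filter_and _ _ Hfc Hgc).
Qed.

Lemma is_derive_filterlim_within (f : R -> R) (s l : R) (D : R -> Prop) :
  is_derive f s l -> filterlim f (within D (locally s)) (locally (f s)).
Proof.
  intros Hd. apply (filterlim_filter_le_1 _ (@filter_le_within _ (locally s) _ _)).
  apply (ex_derive_continuous (K := R_AbsRing) (V := R_NormedModule)). exists l. exact Hd.
Qed.

Lemma right_deriv_continuous (f : R -> R) (l : R) :
  right_deriv f 0 l -> filterlim f (at_right 0) (locally (f 0)).
Proof.
  intros Hd.
  assert (Hid : filterlim (fun h : R => h) (at_right 0) (locally 0)).
  { apply (filterlim_filter_le_1 _ (@filter_le_within _ (locally 0) _ _)), filterlim_id. }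
  assert (Hprod : filterlim (fun h => f 0 + h * ((f (0 + h) - f 0) / h))
                    (at_right 0) (locally (f 0 + 0 * l))).
  { refine (filterlim_comp_2 _ _ Rplus (filterlim_const (f 0)) _
              (filterlim_plus (V := R_NormedModule) (f 0) (0 * l))).
    exact (filterlim_comp_2 _ _ Rmult Hid Hd (filterlim_mult (K := R_AbsRing) 0 l)). }
  rewrite Rmult_0_l, Rplus_0_r in Hprod.
  refine (filterlim_ext_loc _ _ _ Hprod).
  exists (mkposreal 1 Rlt_0_1). intros h _ Hh. simpl in Hh.
  rewrite Rplus_0_l. field. lra.
Qed.

Lemma deriv_on_0T_right_continuous (f f' : R -> R) (T : Rbar) (s : R) :
  deriv_on_0T f f' T -> 0 <= s -> Rbar_lt s T ->
  filterlim f (at_right s) (locally (f s)).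
Proof.
  intros [Hd0 Hd] [Hs | <-] HsT.
  - exact (is_derive_filterlim_within f s (f' s) _ (Hd s Hs HsT)).
  - exact (right_deriv_continuous f (f' 0) Hd0).
Qed.

Lemma is_derive_touch_from_above (g : R -> R) (s l : R) :
  is_derive g s l -> at_left s (fun r => 0 < g r) ->
  0 <= g s /\ (0 < l -> 0 < g s).
Proof.
  intros Hd Hpos.
  assert (Hge : 0 <= g s).
  { apply (closed_filterlim_loc (F := at_left s) g (fun y => 0 <= y)).
    - exact (is_derive_filterlim_within g s l _ Hd).
    - exact (filter_imp _ _ (fun r => Rlt_le 0 (g r)) Hpos).
    - apply closed_ge. }
  split; [exact Hge |]. intros Hl.
  destruct Hge as [Hgt | Hz]; [exact Hgt | exfalso].
  apply is_derive_Reals in Hd. destruct (Hd l Hl) as [delta Hdelta].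
  destruct Hpos as [eps Heps].
  pose proof (cond_pos delta). pose proof (cond_pos eps).
  set (h := - Rmin (delta / 2) (eps / 2)).
  assert (Hh : - delta < h < 0 /\ - eps < h).
  { unfold h. pose proof (Rmin_l (delta / 2) (eps / 2)).
    pose proof (Rmin_r (delta / 2) (eps / 2)).
    assert (0 < Rmin (delta / 2) (eps / 2)) by (apply Rmin_pos; lra). lra. }
  assert (Hq : Rabs ((g (s + h) - g s) / h - l) < l)
    by (apply Hdelta; [lra | rewrite Rabs_left; lra]).
  assert (Hgh : 0 < g (s + h))
    by (apply Heps; [change (Rabs (s + h - s) < eps); rewrite Rabs_left |]; lra).
  rewrite <- Hz in Hq. apply Rabs_def2 in Hq.
  assert (Hquot : (g (s + h) - 0) / h * h = g (s + h)) by (field; lra).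
  nra.
Qed.

Lemma strict_barrier (x y z x' y' z' b b' : R -> R) (T : Rbar) (t : R) :
  deriv_on_0T x x' T -> deriv_on_0T y y' T -> deriv_on_0T z z' T ->
  Rbar_lt t T ->
  (forall s, 0 <= s <= t -> is_derive b s (b' s)) ->
  b 0 < x 0 -> b 0 < y 0 -> b 0 < z 0 ->
  (forall s, 0 < s <= t -> b s <= x s -> b s <= y s -> b s <= z s ->
     b' s < x' s /\ b' s < y' s /\ b' s < z' s) ->
  forall s, 0 <= s <= t -> b s < x s /\ b s < y s /\ b s < z s.
Proof.
  intros Dx Dy Dz HtT Db Hx0 Hy0 Hz0 Hslope.
  assert (HT : forall s, s <= t -> Rbar_lt s T)
    by (intros s Hs; exact (Rbar_le_lt_trans s t T Hs HtT)).
  apply real_induction.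
  - intros s Hs IH. destruct (Req_dec s 0) as [-> | Hs0]; [auto |].
    assert (Htouch : forall u u', deriv_on_0T u u' T ->
              (forall r, 0 <= r < s -> b r < u r) ->
              0 <= u s - b s /\ (0 < u' s - b' s -> 0 < u s - b s)).
    { intros u u' Du Hu. apply (is_derive_touch_from_above (fun r => u r - b r)).
      - apply (is_derive_minus (K := R_AbsRing) (V := R_NormedModule) u b).
        + apply Du; [lra | apply HT; lra].
        + apply Db. lra.
      - apply (at_left_of_forall_between _ 0); [lra |].
        intros r Hr. specialize (Hu r ltac:(lra)). lra. }
    destruct (Htouch x x' Dx (fun r Hr => proj1 (IH r Hr))) as [Hx Hx'].
    destruct (Htouch y y' Dy (fun r Hr => proj1 (proj2 (IH r Hr)))) as [Hy Hy'].
    destruct (Htouch z z' Dz (fun r Hr => proj2 (proj2 (IH r Hr)))) as [Hz Hz'].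
    destruct (Hslope s ltac:(lra) ltac:(lra) ltac:(lra) ltac:(lra)) as (Sx & Sy & Sz).
    specialize (Hx' ltac:(lra)). specialize (Hy' ltac:(lra)). specialize (Hz' ltac:(lra)).
    lra.
  - intros s Hs Hb.
    assert (Hbc : filterlim b (at_right s) (locally (b s)))
      by (apply (is_derive_filterlim_within b s (b' s)), Db; lra).
    assert (Hcont : forall u u', deriv_on_0T u u' T -> b s < u s ->
              at_right s (fun r => b r < u r)).
    { intros u u' Du Hu. apply filterlim_eventually_lt with (a := u s) (b := b s); auto.
      apply (deriv_on_0T_right_continuous u u' T s Du); [lra | apply HT; lra]. }
    destruct Hb as (Hx & Hy & Hz).
    exact (filter_and _ _ (Hcont x x' Dx Hx)
             (filter_and _ _ (Hcont y y' Dy Hy) (Hcont z z' Dz Hz))).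
Qed.

Lemma Rinv_le_of_forall_gt (D u : R) :
  0 < D -> (forall e, D < e -> / e < u) -> / D <= u.
Proof.
  intros HD H. apply Rnot_lt_le. intros Hu.
  destruct (Rle_lt_dec u 0) as [Hu0 | Hu0].
  - specialize (H (D + 1) ltac:(lra)).
    assert (0 < / (D + 1)) by (apply Rinv_0_lt_compat; lra). lra.
  - assert (HDu : D < / u).
    { rewrite <- (Rinv_inv D). apply Rinv_lt_contravar; [| exact Hu].
      apply Rmult_lt_0_compat; [exact Hu0 | apply Rinv_0_lt_compat, HD]. }
    specialize (H (/ u) HDu). rewrite Rinv_inv in H. lra.
Qed.

Lemma not_continuous_at_pole (f : R -> R) (s c : R) :
  0 < c -> at_left s (fun r => c <= (s - r) * f r) -> ~ continuous f s.
Proof.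
  intros Hc Hpole Hf.
  assert (Hg : continuous (fun r => (s - r) * f r) s).
  { apply (continuous_mult (K := R_AbsRing) (fun r => s - r) f); [| exact Hf].
    apply (continuous_minus (V := R_NormedModule));
      [apply continuous_const | apply continuous_id]. }
  assert (Hlim : c <= (s - s) * f s).
  { apply (closed_filterlim_loc (F := at_left s) (fun r => (s - r) * f r) (fun y => c <= y)).
    - exact (filterlim_filter_le_1 _ (@filter_le_within _ (locally s) _ _) Hg).
    - exact Hpole.
    - apply closed_ge. }
  rewrite Rminus_diag, Rmult_0_l in Hlim. lra.
Qed.

Lemma is_derive_inv_affine (K c s : R) :
  K - c * s <> 0 -> is_derive (fun r => / (K - c * r)) s (c * (/ (K - c * s)) ^ 2).
Proof. intros H. auto_derive; [exact H | field; exact H]. Qed.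

Lemma vector_field_gt_barrier_slope (a c beta X Y Z : R) :
  1 <= a -> c < a + 1 -> 0 < beta -> beta <= X -> beta <= Y -> beta <= Z ->
  c * beta ^ 2 < a * X ^ 2 + Z ^ 2 /\
  c * beta ^ 2 < (a + 1) * Z ^ 2 /\
  c * beta ^ 2 < (a + 1) / a * Z * ((a - 1) * X + Y).
Proof.
  intros Ha Hc Hb HX HY HZ.
  assert (Hgap : c * beta ^ 2 < (a + 1) * beta ^ 2)
    by (apply Rmult_lt_compat_r; [apply pow_lt |]; lra).
  assert (HX2 : beta ^ 2 <= X ^ 2) by (apply pow_incr; lra).
  assert (HZ2 : beta ^ 2 <= Z ^ 2) by (apply pow_incr; lra).
  repeat split; [nra | nra |].
  assert (Hlin : a * beta <= (a - 1) * X + Y) by nra.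
  assert (Hprod : a * beta ^ 2 <= Z * ((a - 1) * X + Y)).
  { assert (beta * (a * beta) <= Z * (a * beta)) by (apply Rmult_le_compat_r; nra).
    assert (Z * (a * beta) <= Z * ((a - 1) * X + Y)) by (apply Rmult_le_compat_l; lra).
    nra. }
  replace ((a + 1) / a * Z * ((a - 1) * X + Y))
    with ((a + 1) / a * (Z * ((a - 1) * X + Y))) by ring.
  apply (Rlt_le_trans _ ((a + 1) / a * (a * beta ^ 2))).
  - replace ((a + 1) / a * (a * beta ^ 2)) with ((a + 1) * beta ^ 2) by (field; lra).
    exact Hgap.
  - apply Rmult_le_compat_l; [apply Rlt_le, Rdiv_lt_0_compat; lra | exact Hprod].
Qed.

Lemma solution_gt_perturbed_barrier (n : nat) (T : Rbar) (x y z : R -> R)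
    (x0 y0 z0 d t : R) :
  (1 <= n)%nat -> 0 < x0 -> 0 < y0 -> 0 < z0 -> is_solution n T x y z x0 y0 z0 ->
  0 < d -> 0 <= t -> Rbar_lt t T ->
  0 < / Rmin x0 (Rmin y0 z0) - (INR n + 1) * t ->
  let b := / (/ Rmin x0 (Rmin y0 z0) - (INR n + 1) * t + d * (1 + t)) in
  b < x t /\ b < y t /\ b < z t.
Proof.
  intros Hn Hx0 Hy0 Hz0 (_ & <- & <- & <- & Dx & Dy & Dz) Hd Ht HtT HD b.
  set (m := Rmin (x 0) (Rmin (y 0) (z 0))) in *.
  assert (Hm : 0 < m) by (unfold m; repeat apply Rmin_pos; assumption).
  assert (Hmx : m <= x 0) by apply Rmin_l.
  assert (Hmy : m <= y 0) by (eapply Rle_trans; [apply Rmin_r | apply Rmin_l]).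
  assert (Hmz : m <= z 0) by (eapply Rle_trans; [apply Rmin_r | apply Rmin_r]).
  assert (Ha : 1 <= INR n) by exact (le_INR 1 n Hn).
  set (N := INR n + 1) in *.
  set (K := / m + d). set (c := N - d).
  assert (Hden : forall s, 0 <= s <= t -> 0 < K - c * s).
  { intros s Hs. assert (N * s <= N * t) by (apply Rmult_le_compat_l; unfold N; lra).
    assert (0 <= d * s) by (apply Rmult_le_pos; lra).
    unfold K, c. lra. }
  assert (Hb0 : / (K - c * 0) < m).
  { assert (0 < / m) by (apply Rinv_0_lt_compat, Hm).
    rewrite Rmult_0_r, Rminus_0_r. unfold K. rewrite <- (Rinv_inv m) at 2.
    apply Rinv_lt_contravar; [apply Rmult_lt_0_compat |]; lra. }
  replace b with (/ (K - c * t)) by (unfold b, K, c; f_equal; ring).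
  apply (strict_barrier x y z _ _ _ (fun s => / (K - c * s))
           (fun s => c * (/ (K - c * s)) ^ 2) T t Dx Dy Dz HtT); try lra.
  - intros s Hs. apply is_derive_inv_affine. specialize (Hden s Hs). lra.
  - intros s Hs Hbx Hby Hbz. apply vector_field_gt_barrier_slope; try assumption.
    + unfold c, N. lra.
    + apply Rinv_0_lt_compat, Hden. lra.
Qed.

Lemma solution_ge_barrier (n : nat) (T : Rbar) (x y z : R -> R) (x0 y0 z0 t : R) :
  (1 <= n)%nat -> 0 < x0 -> 0 < y0 -> 0 < z0 -> is_solution n T x y z x0 y0 z0 ->
  0 <= t -> Rbar_lt t T ->
  0 < / Rmin x0 (Rmin y0 z0) - (INR n + 1) * t ->
  let b := / (/ Rmin x0 (Rmin y0 z0) - (INR n + 1) * t) in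
  b <= x t /\ b <= y t /\ b <= z t.
Proof.
  intros Hn Hx0 Hy0 Hz0 Hsol Ht HtT HD b.
  set (D := / Rmin x0 (Rmin y0 z0) - (INR n + 1) * t) in *.
  assert (Hperturbed : forall e, D < e -> / e < x t /\ / e < y t /\ / e < z t).
  { intros e He.
    replace e with (D + (e - D) / (1 + t) * (1 + t)) by (field; lra).
    apply (solution_gt_perturbed_barrier n T x y z x0 y0 z0); try assumption.
    apply Rdiv_lt_0_compat; lra. }
  repeat split; apply Rinv_le_of_forall_gt; try exact HD; intros e He; apply Hperturbed, He.
Qed.

Lemma is_solution_lifespan (n : nat) (T : Rbar) (x y z : R -> R) (x0 y0 z0 : R) :
  (1 <= n)%nat -> 0 < x0 -> 0 < y0 -> 0 < z0 -> is_solution n T x y z x0 y0 z0 ->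
  Rbar_le T (/ ((INR n + 1) * Rmin x0 (Rmin y0 z0))).
Proof.
  intros Hn Hx0 Hy0 Hz0 Hsol.
  set (m := Rmin x0 (Rmin y0 z0)).
  assert (Hm : 0 < m) by (unfold m; repeat apply Rmin_pos; assumption).
  set (N := INR n + 1).
  assert (HN : 0 < N) by (unfold N; pose proof (pos_INR n); lra).
  set (tmax := / (N * m)).
  assert (Htmax : 0 < tmax) by (apply Rinv_0_lt_compat, Rmult_lt_0_compat; assumption).
  apply Rbar_not_lt_le. intros HT.
  apply (not_continuous_at_pole x tmax (/ N)).
  - apply Rinv_0_lt_compat, HN.
  - apply (at_left_of_forall_between _ 0 _ Htmax). intros r Hr.
    assert (Hgap : / m - N * r = N * (tmax - r)) by (unfold tmax; field; lra).
    assert (Hpos : 0 < N * (tmax - r)) by (apply Rmult_lt_0_compat; lra).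
    destruct (solution_ge_barrier n T x y z x0 y0 z0 r Hn Hx0 Hy0 Hz0 Hsol)
      as [Hxr _]; [lra | exact (Rbar_lt_trans r tmax T (proj2 Hr) HT) | |].
    { fold m N. rewrite Hgap. exact Hpos. }
    fold m N in Hxr. rewrite Hgap in Hxr.
    replace (/ N) with ((tmax - r) * / (N * (tmax - r))) by (field; lra).
    apply Rmult_le_compat_l; lra.
  - apply (ex_derive_continuous (K := R_AbsRing) (V := R_NormedModule)).
    destruct Hsol as (_ & _ & _ & _ & Dx & _).
    eexists. exact (proj2 Dx tmax Htmax HT).
Qed.

Theorem proposition3p3 (n : nat) (x0 y0 z0 : R) (T : Rbar) (x y z : R -> R) :
  (2 <= n)%nat ->
  0 < x0 -> 0 < y0 -> 0 < z0 ->
  maximal_solution n T x y z x0 y0 z0 ->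
  Rbar_le T (Finite (/ ((INR n + 1) * Rmin x0 (Rmin y0 z0)))) /\
  (forall t : R, 0 <= t -> Rbar_lt t T ->
     let b := / (/ Rmin x0 (Rmin y0 z0) - (INR n + 1) * t) in
     b <= x t /\ b <= y t /\ b <= z t).
Proof.
  intros Hn Hx0 Hy0 Hz0 [Hsol _].
  assert (Hn1 : (1 <= n)%nat) by lia.
  pose proof (is_solution_lifespan n T x y z x0 y0 z0 Hn1 Hx0 Hy0 Hz0 Hsol) as Hlife.
  split; [exact Hlife |].
  intros t Ht HtT. apply (solution_ge_barrier n T); try assumption.
  assert (Httmax : t < / ((INR n + 1) * Rmin x0 (Rmin y0 z0)))
    by exact (Rbar_lt_le_trans t T _ HtT Hlife).
  set (m := Rmin x0 (Rmin y0 z0)) in *.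
  assert (Hm : 0 < m) by (unfold m; repeat apply Rmin_pos; assumption).
  assert (HN : 0 < INR n + 1) by (pose proof (pos_INR n); lra).
  replace (/ m - (INR n + 1) * t) with ((INR n + 1) * (/ ((INR n + 1) * m) - t))
    by (field; lra).
  apply Rmult_lt_0_compat; lra.
Qed.
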